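(* Let $\Lambda=kS_{(r,s)}/I$ be a quadratic monomial algebra on an $(r,s)$-star quiver with $\operatorname{Ext}^1_{\Lambda^e}(\Lambda,\Lambda^e)=0$. If $s\geq2$ and $a$ is an arrow with $h(a)=z$, then $|\mathcal Z_a|\leq s-1$. If $r\geq 2$ and $b$ is an arrow with $t(b)=z$, then $|\mathcal Z_b|\leq r-1$.
   Context: The $(r,s)$-star quiver $S_{(r,s)}$: central vertex $z$, $r$ arrows $a_i:i\to z$ from distinct vertices and $s$ arrows $b_j:z\to j$ to distinct vertices, nothing else. Quadratic monomial: $I$ admissible generated by paths of length $2$. For $a$ with $h(a)=z$, $\mathcal Z_a=\{b:z\to j\mid ba=0\}$; for $b$ with $t(b)=z$, $\mathcal Z_b=\{a:i\to z\mid ba=0\}$. $\Lambda^e=\Lambda\otimes_k\Lambda^{\mathrm{op}}$. *)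

From HB Require Import structures.
From mathcomp Require Import all_boot all_order all_algebra.
Set Implicit Arguments. Unset Strict Implicit. Unset Printing Implicit Defensive.
Import GRing.Theory.
Local Open Scope ring_scope.

(* The (r,s)-star quiver S_(r,s): central vertex z, sources i : 'I_r with
   arrows a_i : i -> z, targets j : 'I_s with arrows b_j : z -> j.
   A quadratic monomial ideal I is given by the set R of pairs (i,j) with
   b_j a_i \in I (every such set generates an admissible ideal, as J^3 = 0).
   Lambda = kS/I has the k-basis: vertices, arrows, and the paths b_j a_i
   with (i,j) \notin R. *)

Section StarAlgebra.
Variables (k : fieldType) (r s : nat) (R : {set 'I_r * 'I_s}).

(* vertices: None = z, Some (inl i) = source i, Some (inr j) = target j *)
Definition Vtx := option ('I_r + 'I_s).
(* arrows: inl i = a_i, inr j = b_j *)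
Definition Arr := ('I_r + 'I_s)%type.
Definition Path2 := {p : 'I_r * 'I_s | p \notin R}.
Definition Basis := ((Vtx + Arr) + Path2)%type.

Definition bhead (p : Basis) : Vtx :=
  match p with
  | inl (inl v) => v
  | inl (inr (inl i)) => None
  | inl (inr (inr j)) => Some (inr j)
  | inr q => Some (inr (val q).2)
  end.

Definition btail (p : Basis) : Vtx :=
  match p with
  | inl (inl v) => v
  | inl (inr (inl i)) => Some (inl i)
  | inl (inr (inr j)) => None
  | inr q => Some (inl (val q).1)
  end.

(* product p * q of basis elements = "q followed by p" (as in b a),
   None meaning zero *)
Definition bprod (p q : Basis) : option Basis :=
  if btail p != bhead q then None else
  match p, q with
  | inl (inl _), _ => Some q
  | _, inl (inl _) => Some p
  | inl (inr (inr j)), inl (inr (inl i)) =>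
      omap (fun x : Path2 => inr x) (insub (i, j))
  | _, _ => None
  end.

Local Notation Lam := {ffun Basis -> k^o}.
(* Lambda^e = Lambda (x)_k Lambda^op, as coefficient vectors on basis pairs *)
Local Notation Ten := {ffun (Basis * Basis) -> k^o}.

Definition lmul (x y : Lam) : Lam :=
  [ffun c => \sum_(p : Basis) \sum_(q : Basis)
     (if bprod p q == Some c then x p * y q else 0)].

(* outer bimodule structure of Lambda^e: x . (u (x) v) . y = xu (x) vy *)
Definition tlact (x : Lam) (t : Ten) : Ten :=
  [ffun c => \sum_(p : Basis) \sum_(q : Basis)
     (if bprod p q == Some c.1 then x p * t (q, c.2) else 0)].
Definition tract (t : Ten) (y : Lam) : Ten :=
  [ffun c => \sum_(p : Basis) \sum_(q : Basis)
     (if bprod p q == Some c.2 then t (c.1, p) * y q else 0)].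

Definition is_derivation (d : Lam -> Ten) : Prop :=
  (forall (a : k) (x y : Lam), d (a *: x + y) = a *: d x + d y) /\
  (forall x y : Lam, d (lmul x y) = tlact x (d y) + tract (d x) y).

Definition is_inner (d : Lam -> Ten) : Prop :=
  exists m : Ten, forall x : Lam, d x = tlact x m - tract m x.

(* Ext^1_{Lambda^e}(Lambda, Lambda^e) = HH^1(Lambda, Lambda^e)
   = Der(Lambda, Lambda^e) / Inn(Lambda, Lambda^e) vanishes *)
Definition Ext1_vanishes : Prop :=
  forall d : Lam -> Ten, is_derivation d -> is_inner d.

Definition Za (i : 'I_r) : {set 'I_s} := [set j | (i, j) \in R].
Definition Zb (j : 'I_s) : {set 'I_r} := [set i | (i, j) \in R].

End StarAlgebra.

(* If the arrow a_i is annihilated by every b_j and i' is another source, then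
   x |-> x_(a_i') (a_i (x) e_i') is a derivation Lambda -> Lambda^e that is not
   inner; dually for b_j annihilated by every a_i, with x |-> x_(b_j') (e_j' (x) b_j)
   for another target j'.  So when Ext^1 vanishes, Z_(a_i) = all of the b's forces
   i to be the only source; then every Z_b is full, which forces a single target,
   contradicting s >= 2.  The case of Z_b is symmetric. *)

From mathcomp Require Import all_boot all_order all_algebra.
Set Implicit Arguments. Unset Strict Implicit. Unset Printing Implicit Defensive.
Import GRing.Theory.
Local Open Scope ring_scope.

Section StarBasis.
Variables (r s : nat) (R : {set 'I_r * 'I_s}).
Local Notation B := (Basis R).

Definition e_z : B := inl (inl None).
Definition e_src i : B := inl (inl (Some (inl i))).
Definition e_tgt j : B := inl (inl (Some (inr j))).
Definition arr_a i : B := inl (inr (inl i)).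
Definition arr_b j : B := inl (inr (inr j)).

Ltac bprod_cases p := case: p => [[[[?|?]|]|[?|?]]|?]; rewrite /bprod /=.
Ltac bprod_solve :=
  try (case: eqP => //=); try by [];
  (try by case: insubP); by repeat (case=> ?; subst); auto.

Lemma bprod_eq_arr_a i p q : bprod p q = Some (arr_a i) <->
  (p, q) = (e_z, arr_a i) \/ (p, q) = (arr_a i, e_src i).
Proof.
split; first by bprod_cases p; bprod_cases q; bprod_solve.
by case=> -[-> ->]; rewrite /bprod /= ?eqxx.
Qed.

Lemma bprod_eq_arr_b j p q : bprod p q = Some (arr_b j) <->
  (p, q) = (e_tgt j, arr_b j) \/ (p, q) = (arr_b j, e_z).
Proof.
split; first by bprod_cases p; bprod_cases q; bprod_solve.
by case=> -[-> ->]; rewrite /bprod /= ?eqxx.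
Qed.

Lemma bprod_eq_vertex (x : Vtx r s) (p q : B) :
  bprod p q = Some (inl (inl x)) -> p = inl (inl x) /\ q = inl (inl x).
Proof. bprod_cases p; bprod_cases q; bprod_solve. Qed.

Lemma bprod_e_src_l i q w :
  bprod (e_src i) q = Some w <-> q = e_src i /\ w = e_src i.
Proof.
split; first by bprod_cases q; bprod_solve.
by case=> -> ->; rewrite /bprod /= eqxx.
Qed.

Lemma bprod_e_tgt_r j p w :
  bprod p (e_tgt j) = Some w <-> p = e_tgt j /\ w = e_tgt j.
Proof.
split; first by bprod_cases p; bprod_solve.
by case=> -> ->; rewrite /bprod /= eqxx.
Qed.

Lemma bprod_annihilated_arr_a i : (forall j, (i, j) \in R) ->
  forall p w, bprod p (arr_a i) = Some w <-> p = e_z /\ w = arr_a i.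
Proof.
move=> ann p w; split; last by case=> -> ->.
bprod_cases p => //; by [case=> -> | rewrite insubF ?ann].
Qed.

Lemma bprod_annihilated_arr_b j : (forall i, (i, j) \in R) ->
  forall q w, bprod (arr_b j) q = Some w <-> q = e_z /\ w = arr_b j.
Proof.
move=> ann q w; split; last by case=> -> ->.
bprod_cases q => //; by [case=> -> | rewrite insubF ?ann].
Qed.

End StarBasis.

Arguments e_z {r s R}.
Arguments e_src {r s R}.
Arguments e_tgt {r s R}.
Arguments arr_a {r s R}.
Arguments arr_b {r s R}.

Section DoubleSums.
Variables (T : finType) (V : nmodType).

Lemma double_sum1 (F : T -> T -> V) p0 q0 :
  (forall p q, (p, q) != (p0, q0) -> F p q = 0) ->
  \sum_p \sum_q F p q = F p0 q0.
Proof.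
move=> F0; rewrite pair_big /= (bigD1 (p0, q0)) //= big1 ?addr0 //.
by move=> [p q] /F0.
Qed.

Lemma double_sum2 (F : T -> T -> V) p0 q0 p1 q1 : (p0, q0) != (p1, q1) ->
  (forall p q, (p, q) != (p0, q0) -> (p, q) != (p1, q1) -> F p q = 0) ->
  \sum_p \sum_q F p q = F p0 q0 + F p1 q1.
Proof.
move=> neq01 F0; rewrite pair_big /= (bigD1 (p0, q0)) //= (bigD1 (p1, q1)) /=.
  by rewrite big1 ?addr0 // => -[p q] /andP[]; apply: F0.
by rewrite eq_sym.
Qed.

End DoubleSums.

Section RankOneDerivation.
Variables (k : fieldType) (r s : nat) (R : {set 'I_r * 'I_s}).
Local Notation B := (Basis R).
Local Notation Lam := {ffun B -> k^o}.
Local Notation Ten := {ffun (B * B) -> k^o}.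

(* The hypotheses say that c factors only as l c and c rr, and that u (resp. v)
   has no nonzero left (resp. right) multiples besides l u = u (resp. v rr = v).
   Then both sides of the Leibniz rule for [rank1_der] equal
   (x_l y_c + x_c y_rr) (u (x) v). *)
Variables (c l rr u v : B).
Hypothesis factors_c : forall p q,
  bprod p q = Some c <-> (p, q) = (l, c) \/ (p, q) = (c, rr).
Hypothesis l_neq_c : l != c.
Hypothesis left_mul_u : forall p w, bprod p u = Some w <-> p = l /\ w = u.
Hypothesis right_mul_v : forall q w, bprod v q = Some w <-> q = rr /\ w = v.

Definition rank1_der (x : Lam) : Ten := [ffun t => x c * (t == (u, v))%:R].

Lemma lmul_at_arrow (x y : Lam) : lmul x y c = x l * y c + x c * y rr.
Proof.
rewrite ffunE (double_sum2 (p0 := l) (q0 := c) (p1 := c) (q1 := rr)).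
- have lc : bprod l c = Some c by apply/factors_c; left.
  have crr : bprod c rr = Some c by apply/factors_c; right.
  by rewrite lc crr !eqxx.
- by rewrite xpair_eqE negb_and l_neq_c.
move=> p q ne0 ne1; case: eqP => // /factors_c[] /eqP.
  by rewrite (negbTE ne0).
by rewrite (negbTE ne1).
Qed.

Lemma tlact_rank1_der (x y : Lam) t :
  tlact x (rank1_der y) t = x l * y c * (t == (u, v))%:R.
Proof.
case: t => t1 t2; rewrite ffunE /= (double_sum1 (p0 := l) (q0 := u)).
  have lu : bprod l u = Some u by apply/left_mul_u.
  rewrite ffunE lu !xpair_eqE eqxx /= mulrA.
  by rewrite (inj_eq Some_inj) eq_sym; case: (t1 == u); rewrite ?mulr0.
move=> p q ne; rewrite ffunE xpair_eqE.
case: (boolP (q == u)) => [/eqP equ|_]; last by rewrite !mulr0 if_same.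
case: eqP => // /eqP; rewrite equ => /eqP /left_mul_u[epl _].
by rewrite epl equ eqxx in ne.
Qed.

Lemma tract_rank1_der (x y : Lam) t :
  tract (rank1_der x) y t = x c * y rr * (t == (u, v))%:R.
Proof.
case: t => t1 t2; rewrite ffunE /= (double_sum1 (p0 := v) (q0 := rr)).
  have vrr : bprod v rr = Some v by apply/right_mul_v.
  rewrite ffunE vrr !xpair_eqE eqxx andbT /= mulrAC.
  by rewrite (inj_eq Some_inj) eq_sym; case: (t2 == v); rewrite ?andbT ?andbF ?mulr0.
move=> p q ne; rewrite ffunE xpair_eqE.
case: (boolP (p == v)) => [/eqP epv|_]; last by rewrite andbF /= mulr0 mul0r if_same.
case: eqP => // /eqP; rewrite epv => /eqP /right_mul_v[eqr _].
by rewrite epv eqr eqxx in ne.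
Qed.

Lemma rank1_der_derivation : is_derivation rank1_der.
Proof.
split=> [a x y | x y]; apply/ffunP => t.
  by rewrite !ffunE mulrDl -scalerAl.
by rewrite ffunE [RHS]ffunE tlact_rank1_der tract_rank1_der lmul_at_arrow mulrDl.
Qed.

(* An inner derivation sends the basis vector c to c m - m c, whose
   (u (x) v)-coefficient vanishes under these two conditions. *)
Lemma rank1_der_not_inner :
  (forall q, bprod c q <> Some u) -> (forall p, bprod p c <> Some v) ->
  ~ is_inner rank1_der.
Proof.
move=> cq_neq_u pc_neq_v [m inner_m].
pose dc : Lam := [ffun b => (b == c)%:R].
have tlact0 : tlact dc m (u, v) = 0.
  rewrite ffunE big1 // => p _; rewrite big1 // => q _; rewrite ffunE.
  case: eqP => // /eqP; case: (eqVneq p c) => [->|_]; last by rewrite mul0r.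
  by move/eqP/cq_neq_u.
have tract0 : tract m dc (u, v) = 0.
  rewrite ffunE big1 // => p _; rewrite big1 // => q _; rewrite ffunE.
  case: eqP => // /eqP; case: (eqVneq q c) => [->|_]; last by rewrite mulr0.
  by move/eqP/pc_neq_v.
move: inner_m => /(_ dc) /ffunP /(_ (u, v)).
rewrite [RHS]ffunE [X in _ + X]ffunE tlact0 tract0 subr0 !ffunE !eqxx mul1r.
by move/eqP; rewrite oner_eq0.
Qed.

End RankOneDerivation.

Section NonInnerDerivations.
Variables (k : fieldType) (r s : nat) (R : {set 'I_r * 'I_s}).

Lemma sole_source_of_ann_arr_a i : Ext1_vanishes k R ->
  (forall j, (i, j) \in R) -> forall i', i' = i.
Proof.
move=> ext ann i'; apply/eqP; apply: contraT => ne.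
have der := rank1_der_derivation k (bprod_eq_arr_a i') (isT : e_z != arr_a i')
  (bprod_annihilated_arr_a ann) (bprod_e_src_l i').
case: (rank1_der_not_inner _ _ (ext _ der)); last by move=> p /bprod_eq_vertex[].
move=> q /bprod_eq_arr_a[] // -[ei' _]; by rewrite ei' eqxx in ne.
Qed.

Lemma sole_target_of_ann_arr_b j : Ext1_vanishes k R ->
  (forall i, (i, j) \in R) -> forall j', j' = j.
Proof.
move=> ext ann j'; apply/eqP; apply: contraT => ne.
have der := rank1_der_derivation k (bprod_eq_arr_b j') (isT : e_tgt j' != arr_b j')
  (bprod_e_tgt_r j') (bprod_annihilated_arr_b ann).
case: (rank1_der_not_inner _ _ (ext _ der)); first by move=> q /bprod_eq_vertex[].
move=> p /bprod_eq_arr_b[] // -[_ ej']; by rewrite ej' eqxx in ne.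
Qed.

End NonInnerDerivations.

Lemma card_ord_set_neqT n (A : {set 'I_n}) : A != setT -> (#|A| <= n - 1)%N.
Proof.
rewrite -properT => /proper_card; rewrite cardsT card_ord => /(leq_sub2r 1).
by rewrite subn1.
Qed.

Lemma Za_setTP r s (R : {set 'I_r * 'I_s}) i :
  reflect (forall j, (i, j) \in R) (Za R i == setT).
Proof.
apply: (iffP eqP) => [full j | ann]; first by have := in_setT j; rewrite -full inE.
by apply/setP => j; rewrite !inE ann.
Qed.

Lemma Zb_setTP r s (R : {set 'I_r * 'I_s}) j :
  reflect (forall i, (i, j) \in R) (Zb R j == setT).
Proof.
apply: (iffP eqP) => [full i | ann]; first by have := in_setT i; rewrite -full inE.
by apply/setP => i; rewrite !inE ann.
Qed.

Theorem mainTheorem16 (k : fieldType) (r s : nat) (R : {set 'I_r * 'I_s}) :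
  Ext1_vanishes k R ->
  ((1 < s)%N -> forall i : 'I_r, (#|Za R i| <= s - 1)%N) /\
  ((1 < r)%N -> forall j : 'I_s, (#|Zb R j| <= r - 1)%N).
Proof.
move=> ext; split=> [s_gt1 i | r_gt1 j]; apply: card_ord_set_neqT; apply/negP.
- move=> /Za_setTP ann_i; have only_i := sole_source_of_ann_arr_a ext ann_i.
  pose j0 := Ordinal (ltnW s_gt1).
  have only_j0 : forall j, j = j0.
    by apply: (sole_target_of_ann_arr_b ext) => i'; rewrite (only_i i').
  by move: (congr1 val (only_j0 (Ordinal s_gt1))).
- move=> /Zb_setTP ann_j; have only_j := sole_target_of_ann_arr_b ext ann_j.
  pose i0 := Ordinal (ltnW r_gt1).
  have only_i0 : forall i, i = i0.
    by apply: (sole_source_of_ann_arr_a ext) => j'; rewrite (only_j j').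
  by move: (congr1 val (only_i0 (Ordinal r_gt1))).
Qed.
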